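(* Let $E$ be a metric space, $g\in\Sigma^E$, $t_0\in[0,\widehat T_g)$, and let $\tau$ be an $\mathcal F$-stopping time on $\Sigma^E$. Define $\tau_{g;t_0}$ on $\Sigma^E$ by $$\tau_{g;t_0}(f)=\begin{cases}(\tau(g\oplus_{t_0}f)-t_0)\vee 0,& \text{if } f(0)=g(t_0);\\ \widehat T_f,&\text{otherwise}.\end{cases}$$ Then $\tau_{g;t_0}$ is also an $\mathcal F$-stopping time.
   Context: $\Sigma^E$ is the set of continuous functions $f:[0,\widehat T_f)\to E$ with lifetime $\widehat T_f\in(0,\infty]$. For $t\ge0$ let $\Sigma^E_t=\{f:\widehat T_f>t\}$ and $\pi_t(f)=f(t)$ on $\Sigma^E_t$. Let $\mathcal F^*_t$ be the $\sigma$-algebra on $\Sigma^E$ generated by the sets $\Sigma^E_s$ and the maps $\pi_s$ (on $\Sigma^E_s$, with Borel sets of $E$) for $0\le s\le t$, and let $\mathcal F=(\mathcal F_t)_{t\ge0}$ be its right-continuation, $\mathcal F_t=\bigcap_{s>t}\mathcal F^*_s$. An $\mathcal F$-stopping time is a map $\tau:\Sigma^E\to[0,\infty]$ with $\{\tau\le t\}\in\mathcal F_t$ for all $t$. For $g\in\Sigma^E$, $t_0\in[0,\widehat T_g)$ and $f\in\Sigma^E$ with $f(0)=g(t_0)$, $g\oplus_{t_0}f$ is the function with lifetime $t_0+\widehat T_f$ equal to $g(t)$ for $0\le t<t_0$ and to $f(t-t_0)$ for $t_0\le t<t_0+\widehat T_f$. *)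

From HB Require Import structures.
From mathcomp Require Import all_boot all_order all_algebra.
From mathcomp Require Import all_classical all_reals all_analysis.
Set Implicit Arguments. Unset Strict Implicit. Unset Printing Implicit Defensive.
Import Order.TTheory GRing.Theory Num.Theory numFieldNormedType.Exports.
Local Open Scope classical_set_scope.
Local Open Scope ring_scope.

(* Raw paths: a lifetime in \bar R together with a function R -> E; only the
   values on [0, life) matter.  Sigma^E is the set of raw paths with
   positive lifetime that are continuous on [0, life). *)
Record rpath (R : realType) (E : Type) := Path { life : \bar R ; pathf : R -> E }.

Section Defs.
Context {R : realType} {E : pseudoMetricType R}.

Definition dom (p : rpath R E) : set R :=
  [set t | 0 <= t /\ (t%:E < life p)%E].

Definition Sigma : set (rpath R E) :=
  [set p | (0 < life p)%E /\ {within dom p, continuous (pathf p)}].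

Definition Sigma_t (t : R) : set (rpath R E) :=
  [set p | Sigma p /\ (t%:E < life p)%E].

Definition borelE : set (set E) := <<s open >>.

Definition gen_Fstar (t : R) : set (set (rpath R E)) :=
  [set A | exists s, 0 <= s /\ s <= t /\
     (A = Sigma_t s \/
      exists B, borelE B /\ A = Sigma_t s `&` [set p | B (pathf p s)])].

Definition Fstar (t : R) : set (set (rpath R E)) := <<s Sigma, gen_Fstar t >>.

Definition Fr (t : R) : set (set (rpath R E)) :=
  [set A | forall s, t < s -> Fstar s A].

Definition stopping_time (tau : rpath R E -> \bar R) : Prop :=
  (forall p, Sigma p -> (0 <= tau p)%E) /\
  (forall t, 0 <= t -> Fr t (Sigma `&` [set p | (tau p <= t%:E)%E])).

Definition concat (g : rpath R E) (t0 : R) (f : rpath R E) : rpath R E :=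
  Path (t0%:E + life f)%E
       (fun t => if t < t0 then pathf g t else pathf f (t - t0)).

Definition tau_shift (tau : rpath R E -> \bar R) (g : rpath R E) (t0 : R)
  (f : rpath R E) : \bar R :=
  if `[< pathf f 0 = pathf g t0 >] then maxe (tau (concat g t0 f) - t0%:E)%E 0%E
  else life f.

End Defs.

From HB Require Import structures.
From mathcomp Require Import all_boot all_order all_algebra.
From mathcomp Require Import all_classical all_reals all_analysis.
Set Implicit Arguments. Unset Strict Implicit. Unset Printing Implicit Defensive.
Import Order.TTheory GRing.Theory Num.Theory numFieldNormedType.Exports.
Local Open Scope classical_set_scope.
Local Open Scope ring_scope.

(* On paths f starting at g(t0), the map f |-> g (+)_{t0} f pulls F*_{s+t0}
   back into F*_s: a generator at a time r < t0 only sees g, so its preimage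
   is all or nothing, while one at a time r >= t0 becomes the same generator
   for f at time r - t0.  So {tau_{g;t0} <= t} is the trace on these paths of
   the preimage of {tau <= t + t0}, together with the paths not starting at
   g(t0) that die by time t; both pieces are in F*_s for every s > t, because
   points of E are closed and so {f | f(0) = g(t0)} is in F*_0. *)

Section sigma_algebra_closure.
Context {T : Type} (X : set T) (S : set (set T)) (hS : sigma_algebra X S).

Lemma sigma_algebra_setU A B : S A -> S B -> S (A `|` B).
Proof.
case: hS => S0 _ SU SA SB; rewrite -bigcup2E.
by apply: SU => -[|[|n]].
Qed.

Lemma sigma_algebra_setD A B : A `<=` X -> S A -> S B -> S (A `\` B).
Proof.
move=> AX SA SB; case: (hS) => _ SD _.
have -> : A `\` B = X `\` ((X `\` A) `|` B).
  apply/seteqP; split=> x /=.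
    by move=> [Ax nBx]; split; [exact: AX | move=> [[]|]].
  move=> [Xx nAB]; split; last by move=> Bx; apply: nAB; right.
  by apply: contrapT => nAx; apply: nAB; left.
by apply/SD/sigma_algebra_setU => //; exact: SD.
Qed.

Lemma sigma_algebra_setI A B : A `<=` X -> S A -> S B -> S (A `&` B).
Proof.
move=> AX SA SB; case: (hS) => _ SD _.
have -> : A `&` B = A `\` (X `\` B).
  apply/seteqP; split=> x /=; first by move=> [Ax Bx]; split => // -[].
  move=> [Ax nXB]; split => //.
  by apply: contrapT => nBx; apply: nXB; split => //; exact: AX.
by apply: sigma_algebra_setD => //; exact: SD.
Qed.

Lemma g_sigma_preimage_trace {U : Type} (D : set U) (G : set (set U))
    (Y : set T) (f : T -> U) :
  Y `<=` X -> S Y -> (forall y, Y y -> D (f y)) ->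
  (forall A, G A -> S (Y `&` f @^-1` A)) ->
  forall A, <<s D, G >> A -> S (Y `&` f @^-1` A).
Proof.
move=> YX SY fYD SG; apply: smallest_sub => //; case: (hS) => S0 _ SU; split.
- by rewrite /= preimage_set0 setI0.
- move=> A SA /=; have -> : Y `&` f @^-1` (D `\` A) = Y `\` (Y `&` f @^-1` A).
    apply/seteqP; split=> y /=; first by move=> [Yy [_ nAy]]; split => // -[].
    by move=> [Yy nYA]; split => //; split; [exact: fYD | move=> ?; apply: nYA].
  exact: sigma_algebra_setD.
- by move=> F SF; rewrite /= preimage_bigcup setI_bigcupr; exact: SU.
Qed.

End sigma_algebra_closure.

Lemma continuous_within_nbhs {T U : topologicalType} (A : set T) (h : T -> U)
    x W :
  {within A, continuous h} -> A x -> nbhs (h x) W ->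
  \forall y \near x, A y -> W (h y).
Proof. by move=> /subspace_continuousP hc Ax; exact: hc. Qed.

Lemma nbhs_subr {K : numFieldType} {V : normedModType K} (x c : V) (P : set V) :
  nbhs (x - c) P -> \forall y \near x, P (y - c).
Proof. by apply: cvgB; [exact: cvg_id | exact: cvg_cst]. Qed.

Section concatenation.
Context {R : realType} {E : pseudoMetricType R}.
Implicit Types (g f : rpath R E) (x : R).

Lemma concat_near_left g f (t0 : R) x (W : set E) :
  Sigma g -> (t0%:E < life g)%E -> pathf f 0 = pathf g t0 -> 0 <= x ->
  nbhs (pathf (concat g t0 f) x) W ->
  \forall y \near x, 0 <= y < t0 -> W (pathf g y).
Proof.
move=> [_ gc] t0g fg x0 Wx.
have [xt|tx] := leP x t0; last first.
  apply: filterS (lt_nbhsr tx) => y ty /andP[_ yt].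
  by have := lt_trans ty yt; rewrite ltxx.
have gx : pathf (concat g t0 f) x = pathf g x.
  by rewrite /=; case: ltgtP xt => // -> _; rewrite subrr.
have domx : dom g x by split => //; apply: le_lt_trans t0g; rewrite lee_fin.
rewrite gx in Wx; apply: filterS (continuous_within_nbhs gc domx Wx).
move=> y + /andP[y0 yt]; apply; split => //.
by apply: lt_trans t0g; rewrite lte_fin.
Qed.

Lemma concat_near_right g f (t0 : R) x (W : set E) :
  Sigma f -> (x%:E < t0%:E + life f)%E -> nbhs (pathf (concat g t0 f) x) W ->
  \forall y \near x,
    t0 <= y -> ((y - t0)%:E < life f)%E -> W (pathf f (y - t0)).
Proof.
move=> [_ fc] xl Wx.
have [xt|tx] := ltP x t0.
  apply: filterS (lt_nbhsl xt) => y yt ty.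
  by have := lt_le_trans yt ty; rewrite ltxx.
have domx : dom f (x - t0) by split; [rewrite subr_ge0 | rewrite EFinB lteBlDl].
rewrite /= ltNge tx in Wx.
apply: filterS (nbhs_subr (continuous_within_nbhs fc domx Wx)) => y + ty yl.
by apply; split; rewrite ?subr_ge0.
Qed.

Lemma Sigma_concat g f (t0 : R) : Sigma g -> 0 <= t0 -> (t0%:E < life g)%E ->
  Sigma f -> pathf f 0 = pathf g t0 -> Sigma (concat g t0 f).
Proof.
move=> hg t0_ge0 t0g hf fg; split.
  by apply: lt_le_trans (leeDr _ _) => //; case: hf.
apply/subspace_continuousP => x [x0 xl] W /= Wx.
apply: filterS (filterI (concat_near_left hg t0g fg x0 Wx)
                        (concat_near_right hf xl Wx)).
move=> y [left right] [y0 yl]; rewrite /from_subspace /=; case: ltP => yt.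
  by apply: left; rewrite y0 yt.
by apply: right => //; rewrite EFinB lteBlDl.
Qed.

End concatenation.

Section shifted_stopping_time.
Context {R : realType} {E : pseudoMetricType R} (hE : hausdorff_space E).
Implicit Types (s r : R) (p : rpath R E).

Lemma Fstar_Sigma_t s r : 0 <= r -> r <= s ->
  Fstar s (Sigma_t r : set (rpath R E)).
Proof.
by move=> r0 rs; apply: sub_sigma_algebra; exists r; do 2!split => //; left.
Qed.

Lemma Fstar_pi s r (B : set E) : 0 <= r -> r <= s -> borelE B ->
  Fstar s (Sigma_t r `&` [set p | B (pathf p r)]).
Proof.
move=> r0 rs hB; apply: sub_sigma_algebra; exists r; do 2!split => //.
by right; exists B.
Qed.

Lemma Sigma_t_lt0 r : r < 0 -> Sigma_t r = Sigma :> set (rpath R E).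
Proof.
move=> r0; apply/seteqP; split=> [p [] // | p sp]; split => //.
by case: sp => p0 _; apply: lt_trans p0; rewrite lte_fin.
Qed.

Definition Sigma_from (x : E) : set (rpath R E) :=
  Sigma `&` [set p | pathf p 0 = x].

Lemma Sigma_from_subset x : Sigma_from x `<=` Sigma.
Proof. by move=> p []. Qed.

Lemma Fstar_Sigma_from s x : 0 <= s -> Fstar s (Sigma_from x).
Proof.
move=> s0.
have -> : Sigma_from x = Sigma_t 0 `&` [set p | [set x] (pathf p 0)].
  apply/seteqP; split=> p /=; last by move=> [[sp _] px].
  by move=> [sp px]; do 2!split => //; case: sp.
apply: Fstar_pi => //; rewrite -[[set x]]setCK -setTD.
apply: sigma_algebraCD; apply: sub_sigma_algebra; apply: closed_openC.
exact: (@accessible_closed_set1 _ (hausdorff_accessible hE) x).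
Qed.

Variables (g : rpath R E) (t0 : R).
Hypotheses (hg : Sigma g) (t0_ge0 : 0 <= t0) (t0g : (t0%:E < life g)%E).

Lemma Sigma_from_concat p : Sigma_from (pathf g t0) p -> Sigma (concat g t0 p).
Proof. by move=> [sp pg]; exact: Sigma_concat. Qed.

Lemma Sigma_from_concat_Sigma_t r :
  Sigma_from (pathf g t0) `&` concat g t0 @^-1` Sigma_t r =
  Sigma_from (pathf g t0) `&` Sigma_t (r - t0).
Proof.
apply/seteqP; split=> p [Dp [sp hp]]; do 2!split => //.
- by case: Dp.
- by rewrite EFinB lteBlDl.
- exact: Sigma_from_concat.
- by rewrite /= -lteBlDl // -EFinB.
Qed.

Lemma Fstar_concat_preimage s A : 0 <= s -> Fstar (s + t0) A ->
  Fstar s (Sigma_from (pathf g t0) `&` concat g t0 @^-1` A).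
Proof.
move=> s0; apply: (g_sigma_preimage_trace (smallest_sigma_algebra _ _)).
- exact: Sigma_from_subset.
- exact: Fstar_Sigma_from.
- exact: Sigma_from_concat.
move=> {}A [r [r0 [rs hA]]].
have [rt|tr] := ltP r t0.
  have trace_Sigma_t : Sigma_from (pathf g t0) `&` concat g t0 @^-1` Sigma_t r
                       = Sigma_from (pathf g t0).
    rewrite Sigma_from_concat_Sigma_t Sigma_t_lt0 ?subr_lt0 //.
    exact/setIidl/Sigma_from_subset.
  case: hA => [->|[B [hB ->]]].
    by rewrite trace_Sigma_t; exact: Fstar_Sigma_from.
  rewrite preimage_setI setIA trace_Sigma_t.
  have [Bgr|nBgr] := pselect (B (pathf g r)).
    rewrite (_ : concat g t0 @^-1` _ = setT) ?setIT.
      exact: Fstar_Sigma_from.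
    by apply/seteqP; split=> // p _ /=; rewrite rt.
  rewrite (_ : concat g t0 @^-1` _ = set0) ?setI0; first exact: sigma_algebra0.
  by apply/seteqP; split=> // p /=; rewrite rt.
have rt0_ge0 : 0 <= r - t0 by rewrite subr_ge0.
have rt0s : r - t0 <= s by rewrite lerBlDr.
have FstarI := sigma_algebra_setI (smallest_sigma_algebra _ _)
  (Sigma_from_subset (x := pathf g t0)) (Fstar_Sigma_from _ s0).
case: hA => [->|[B [hB ->]]].
  by rewrite Sigma_from_concat_Sigma_t; apply: FstarI; exact: Fstar_Sigma_t.
rewrite preimage_setI setIA Sigma_from_concat_Sigma_t -setIA.
rewrite (_ : concat g t0 @^-1` _ = [set p | B (pathf p (r - t0))]); last first.
  by apply/seteqP; split=> p /=; rewrite ltNge tr.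
by apply: FstarI; exact: Fstar_pi.
Qed.

Lemma Sigma_tau_shift_le (tau : rpath R E -> \bar R) t : 0 <= t ->
  Sigma `&` [set p | (tau_shift tau g t0 p <= t%:E)%E] =
  (Sigma_from (pathf g t0) `&`
     concat g t0 @^-1` (Sigma `&` [set p | (tau p <= (t + t0)%:E)%E]))
  `|` (Sigma `\` Sigma_from (pathf g t0) `\` Sigma_t t).
Proof.
move=> t_ge0; apply/seteqP; split=> p /=.
  move=> [sp]; rewrite /tau_shift; case: asboolP => pg hp.
    left; split; first by split.
    split; first exact: Sigma_from_concat.
    by move: hp; rewrite ge_max => /andP[+ _]; rewrite EFinD -leeBlDr.
  right; split; first by split => // -[].
  by move=> [_ lt]; have := lt_le_trans lt hp; rewrite ltxx.
move=> [[[sp pg] [_ hp]] | [[sp npg] nt]]; split => //; rewrite /tau_shift.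
  case: asboolP => // _.
  by rewrite ge_max lee_fin t_ge0 andbT leeBlDr // -EFinD.
case: asboolP => pg; first by exfalso; apply: npg.
by rewrite leNgt; apply/negP => lt; apply: nt.
Qed.

End shifted_stopping_time.

Theorem lemma2p10 (R : realType) (E : pseudoMetricType R)
  (hE : hausdorff_space E)
  (g : rpath R E) (t0 : R) (hg : Sigma g) (ht0 : 0 <= t0) (ht0g : (t0%:E < life g)%E)
  (tau : rpath R E -> \bar R) (htau : stopping_time tau) :
  stopping_time (tau_shift tau g t0).
Proof.
split=> [p [p0 _] | t t_ge0 s ts].
  rewrite /tau_shift; case: asboolP => _; last exact: ltW.
  by rewrite le_max lexx orbT.
have s_ge0 : 0 <= s := le_trans t_ge0 (ltW ts).
rewrite Sigma_tau_shift_le //.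
apply: (sigma_algebra_setU (smallest_sigma_algebra _ _)).
  apply: (Fstar_concat_preimage hE hg ht0 ht0g s_ge0).
  by apply: htau.2 (t + t0) (addr_ge0 t_ge0 ht0) _ _; rewrite ltrD2r.
apply: (sigma_algebra_setD (smallest_sigma_algebra _ _)).
- by move=> p [].
- by apply: sigma_algebraCD; exact: Fstar_Sigma_from.
- exact: Fstar_Sigma_t (ltW ts).
Qed.
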